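(* Let $q$ be an odd prime power with $q\equiv2\pmod 3$, let $m,n$ be positive integers, let $\omega\in\mathbb{F}_{q^2}$ be an element of multiplicative order $3$, and let $\varepsilon\in\mathbb{F}_q^*\cup\{\pm\omega,\pm\omega^2\}$. Then $$f(x)=(x+\omega x^q)^m+\varepsilon(\omega x-x^q)^n$$ is a permutation polynomial of $\mathbb{F}_{q^2}$ if and only if $\gcd(mn,q-1)=1$.
   Context: A polynomial is a permutation polynomial of $\mathbb{F}_{q^2}$ if the map it induces on $\mathbb{F}_{q^2}$ is bijective. *)

From mathcomp Require Import all_boot all_algebra all_field.
Set Implicit Arguments. Unset Strict Implicit. Unset Printing Implicit Defensive.
Import GRing.Theory.
Local Open Scope ring_scope.

Definition prime_power (q : nat) : Prop :=
  exists p k : nat, prime p /\ (0 < k)%N /\ q = (p ^ k)%N.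

(* The subfield F_q of F_{q^2}: elements fixed by x |-> x^q. *)
Definition in_subfield_q (F : finFieldType) (q : nat) (x : F) : bool :=
  x ^+ q == x.

Definition is_perm_map (F : finFieldType) (f : F -> F) : Prop := bijective f.

From mathcomp Require Import all_boot all_algebra all_field.
From mathcomp Require Import ring cyclic.
Import GRing.Theory.
Local Open Scope ring_scope.
Set Implicit Arguments. Unset Strict Implicit.

(* Write f = U^m + eps V^n with U x = x + w x^q and V x = w x - x^q.  The
   Frobenius x |-> x^q acts on U and V by the scalars w^2 and -w^2, hence on
   U^m and eps V^n by two distinct scalars w^(2m) and -w^(j+2n), where
   eps^q = w^j eps; so f x = f y forces U x^m = U y^m and V x^n = V y^n.  On
   each eigenline {u | u^q = c u} the map u |-> u^k is injective when
   gcd(k, q-1) = 1, and x is recovered from U x and V x.  Conversely, if a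
   prime r divides gcd(mn, q-1), pick zeta in F_q of order r and x on the
   line V = 0 (if r | m) or U = 0 (if r | n): then f (zeta x) = f x. *)

Lemma expr_coprime_eq1 (R : nzRingType) (x : R) (m k : nat) :
  coprime m k -> x ^+ m = 1 -> x ^+ k = 1 -> x = 1.
Proof.
case: k => [|k] cop xm xk; first by move: cop xm; rewrite /coprime gcdn0 => /eqP ->.
have [d xd dk] := prim_order_exists (ltn0Sn k) xk.
have dm : (d %| m)%N by rewrite (prim_order_dvd xd) xm.
have d1 : d = 1%N by apply/eqP; rewrite -dvdn1 -(eqP cop) dvdn_gcd dm.
by move: (prim_expr_order xd); rewrite d1 expr1.
Qed.

Lemma expr_inj_eigen (F : fieldType) (q m : nat) (c u v : F) :
  (0 < m)%N -> coprime m (q - 1) -> c != 0 ->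
  u ^+ q = c * u -> v ^+ q = c * v -> u ^+ m = v ^+ m -> u = v.
Proof.
move=> m_gt0 cop c0 uq vq; have [->|v0] := eqVneq v 0.
  by move/eqP; rewrite expr0n gtn_eqF // expf_eq0 m_gt0 => /eqP.
move=> uvm.
have vm0 : v ^+ m != 0 by rewrite expf_neq0.
apply: divr1_eq; apply: (expr_coprime_eq1 cop); first by rewrite expr_div_n uvm divff.
have u0 : u != 0 by apply: contraNneq vm0 => u0; rewrite -uvm u0 expr0n gtn_eqF.
have r0 : u / v != 0 by rewrite mulf_neq0 ?invr_eq0.
have rq : (u / v) ^+ q = u / v by rewrite expr_div_n uq vq invfM mulrACA divff // mul1r.
case: q rq {uq vq cop} => [|q] rq; first by rewrite -rq.
by apply: (mulIf r0); rewrite mul1r -exprSr subn1.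
Qed.

Lemma prim_root3_sum (R : idomainType) (w : R) :
  3.-primitive_root w -> 1 + w + w ^+ 2 = 0.
Proof.
move=> w_prim; have w1 : w - 1 != 0.
  by rewrite subr_eq0; have := prim_order_dvd w_prim 1; rewrite expr1 => <-.
apply/eqP; rewrite -(mulrI_eq0 _ (mulfI w1)).
have -> : (w - 1) * (1 + w + w ^+ 2) = w ^+ 3 - 1 by ring.
by rewrite prim_expr_order ?subrr.
Qed.

Lemma expr_neq_opp_expr (R : idomainType) (z : R) (k a b : nat) :
  2%:R != 0 :> R -> odd k -> z ^+ k = 1 -> z ^+ a != - z ^+ b.
Proof.
move=> two0 k_odd zk; apply/eqP => /(congr1 (fun t => t ^+ k)).
rewrite exprNn -signr_odd k_odd mulN1r -!exprM !(mulnC _ k) !exprM zk !expr1n.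
by move/eqP; rewrite -subr_eq0 opprK -(natrD R 1 1) (negPf two0).
Qed.

Lemma eq_of_weighted_sums (R : idomainType) (a b p1 q1 p2 q2 : R) : a != b ->
  p1 + q1 = p2 + q2 -> a * p1 + b * q1 = a * p2 + b * q2 -> p1 = p2 /\ q1 = q2.
Proof.
move=> ab e1 e2.
have e : (a - b) * (p1 - p2) = (a * p1 + b * q1) - (a * p2 + b * q2)
                               - b * ((p1 + q1) - (p2 + q2)) by ring.
rewrite e2 e1 !subrr mulr0 subr0 in e.
move/eqP: e; rewrite mulf_eq0 subr_eq0 (negPf ab) subr_eq0 => /eqP ep.
by split=> //; move: e1; rewrite ep => /addrI.
Qed.

Lemma finField_prim_root (F : finFieldType) : {z : F | #|F|.-1.-primitive_root z}.
Proof.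
pose rs := enum [pred x : F | x != 0].
have F_gt0 : (0 < #|F|)%N by apply/card_gt0P; exists 0.
have : has #|F|.-1.-primitive_root rs.
  apply: has_prim_root; last 2 first.
  - exact: enum_uniq.
  - by rewrite -cardE cardC1.
  - by rewrite -subn1 subn_gt0 finNzRing_gt1.
  apply/allP => x; rewrite mem_enum /= => x0; rewrite unity_rootE.
  by apply/eqP; apply: (mulIf x0); rewrite mul1r -exprSr prednK // expf_card.
by move/hasP/sig2W => [z _ z_prim]; exists z.
Qed.

Lemma finField_expr_surj (F : finFieldType) (a b : nat) (c : F) :
  #|F|.-1 = (a * b)%N -> c ^+ b = 1 -> exists2 x : F, x != 0 & x ^+ a = c.
Proof.
move=> cardF cb; have [z z_prim] := finField_prim_root F.
have N_gt0 : (0 < a * b)%N by rewrite -cardF -subn1 subn_gt0 finNzRing_gt1.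
have [a_gt0 b_gt0] : (0 < a)%N /\ (0 < b)%N by apply/andP; rewrite -muln_gt0.
have cN : c ^+ #|F|.-1 = 1 by rewrite cardF mulnC exprM cb expr1n.
have [[i _] /= ci] := prim_rootP z_prim cN.
have : (a * b %| i * b)%N by rewrite -cardF (prim_order_dvd z_prim) exprM -ci cb.
rewrite dvdn_pmul2r // => ai.
exists (z ^+ (i %/ a)); last by rewrite -exprM divnK.
by rewrite expf_neq0 // (prim_root_eq0 z_prim) cardF -lt0n.
Qed.

Lemma finField_nontrivial_root (F : finFieldType) (r : nat) :
  (1 < r)%N -> (r %| #|F|.-1)%N -> exists2 zeta : F, zeta != 1 & zeta ^+ r = 1.
Proof.
move=> r_gt1 r_dvd; have [z z_prim] := finField_prim_root F.
have zeta_prim := dvdn_prim_root z_prim r_dvd.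
exists (z ^+ (#|F|.-1 %/ r)); last exact: prim_expr_order.
apply: contraTneq r_gt1 => zeta1.
by rewrite -leqNgt dvdn_leq // (prim_order_dvd zeta_prim) expr1 zeta1.
Qed.

Lemma prime_power_gt1 (q : nat) : prime_power q -> (1 < q)%N.
Proof.
case=> p [k [p_pr [k_gt0 ->]]].
by rewrite -(expn0 p) ltn_exp2l ?prime_gt1.
Qed.

Section QuadraticFrobenius.

Variables (F : finFieldType) (q : nat).
Hypotheses (q_pp : prime_power q) (cardF : #|F| = (q ^ 2)%N).

Let q_gt1 : (1 < q)%N := prime_power_gt1 q_pp.

Lemma pchar_prime_power : exists2 p, p \in [pchar F] & q = (p ^ logn p q)%N.
Proof.
case: q_pp => p [k [p_pr [k_gt0 qpk]]]; exists p; last by rewrite qpk pfactorK.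
by apply: (card_finPcharP (n := (k * 2)%N)) => //; rewrite cardF qpk expnM.
Qed.

Lemma frobD (x y : F) : (x + y) ^+ q = x ^+ q + y ^+ q.
Proof.
have [p pF ->] := pchar_prime_power; apply: exprDn_pchar.
by rewrite (eq_pnat _ (pcharf_eq pF)) pnatX pnat_id ?(pcharf_prime pF).
Qed.

Lemma frobN (x : F) : (- x) ^+ q = - x ^+ q.
Proof.
by apply/eqP; rewrite -addr_eq0 -frobD addNr expr0n gtn_eqF // ltnW.
Qed.

Lemma frobK (x : F) : (x ^+ q) ^+ q = x.
Proof. by rewrite -exprM mulnn -cardF expf_card. Qed.

Lemma odd_prime_power_char_neq2 : odd q -> 2%:R != 0 :> F.
Proof.
have [p pF qp] := pchar_prime_power; rewrite qp oddX => /orP[/eqP l0|p_odd].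
  by move: q_gt1; rewrite qp l0.
rewrite -(dvdn_pcharf pF) dvdn_prime2 ?(pcharf_prime pF) //.
by apply: contraTneq p_odd => ->.
Qed.

Lemma exists_frob_eigen (c : F) :
  c ^+ (q + 1) = 1 -> exists2 x : F, x != 0 & x ^+ q = c * x.
Proof.
move=> cq.
have cardU : #|F|.-1 = ((q - 1) * (q + 1))%N.
  by rewrite cardF -subn1 -{2}(exp1n 2) subn_sqr.
have [x x0 xq] := finField_expr_surj cardU cq; exists x => //.
by rewrite -{1}(subnK (ltnW q_gt1)) exprD xq expr1.
Qed.

Lemma exists_subfield_root (r : nat) :
  (1 < r)%N -> (r %| q - 1)%N ->
  exists zeta : F, [/\ zeta != 1, zeta ^+ r = 1 & zeta ^+ q = zeta].
Proof.
move=> r_gt1 r_dvd.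
have r_dvdU : (r %| #|F|.-1)%N.
  by rewrite cardF -subn1 -{2}(exp1n 2) subn_sqr dvdn_mulr.
have [zeta z1 zr] := finField_nontrivial_root r_gt1 r_dvdU; exists zeta; split=> //.
have zq1 : zeta ^+ (q - 1) = 1 by case/dvdnP: r_dvd => j ->; rewrite mulnC exprM zr expr1n.
by rewrite -{1}(subnK (ltnW q_gt1)) exprD zq1 mul1r expr1.
Qed.

Section CubeRootTwist.

Variable w : F.
Hypotheses (q_odd : odd q) (q_mod3 : (q %% 3 = 2)%N) (w_prim : 3.-primitive_root w).

Definition upart (x : F) := x + w * x ^+ q.
Definition vpart (x : F) := w * x - x ^+ q.
Local Notation U := upart.
Local Notation V := vpart.

Let w3 : w ^+ 3 = 1. Proof. exact: prim_expr_order. Qed.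

Let w_neq0 : w != 0. Proof. by rewrite (prim_root_eq0 w_prim). Qed.

Lemma expr_w_q : w ^+ q = w ^+ 2.
Proof. by rewrite -(prim_expr_mod w_prim) q_mod3. Qed.

Lemma frob_upart x : U x ^+ q = w ^+ 2 * U x.
Proof. by rewrite frobD exprMn expr_w_q frobK mulrDr mulrA -exprSr w3 mul1r addrC. Qed.

Lemma frob_vpart x : V x ^+ q = - w ^+ 2 * V x.
Proof.
by rewrite frobD frobN exprMn expr_w_q frobK mulNr mulrBr mulrA -exprSr w3 mul1r opprB.
Qed.

Lemma upart_vpart_inj x y : U x = U y -> V x = V y -> x = y.
Proof.
have UV t : w * U t - V t = - (w * t ^+ q).
  rewrite /upart /vpart (_ : _ - _ = (1 + w + w ^+ 2) * t ^+ q - w * t ^+ q); last by ring.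
  by rewrite prim_root3_sum // mul0r sub0r.
move=> eU eV; have /oppr_inj/(mulfI w_neq0) xyq : - (w * x ^+ q) = - (w * y ^+ q).
  by rewrite -!UV eU eV.
by rewrite -(frobK x) xyq frobK.
Qed.

Lemma frob_eps_eigen (eps : F) :
  (in_subfield_q q eps && (eps != 0)) ||
  [|| eps == w, eps == - w, eps == w ^+ 2 | eps == - w ^+ 2] ->
  eps != 0 /\ exists j, eps ^+ q = w ^+ j * eps.
Proof.
case/orP => [/andP[/eqP epsq eps0]|]; first by split=> //; exists 0%N; rewrite mul1r.
have w20 : w ^+ 2 != 0 by rewrite expf_neq0.
case/or4P => /eqP ->.
- by split=> //; exists 1%N; rewrite expr_w_q.
- by split; [rewrite oppr_eq0 | exists 1%N; rewrite frobN expr_w_q mulrN].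
- by split=> //; exists 2%N; rewrite exprAC expr_w_q -expr2.
- by split; [rewrite oppr_eq0 | exists 2%N; rewrite frobN exprAC expr_w_q mulrN -expr2].
Qed.

Lemma injective_of_coprime (m n j : nat) (eps : F) :
  (0 < m)%N -> (0 < n)%N -> eps != 0 -> eps ^+ q = w ^+ j * eps ->
  coprime (m * n) (q - 1) -> injective (fun x => U x ^+ m + eps * V x ^+ n).
Proof.
move=> m_gt0 n_gt0 eps0 epsq.
rewrite coprimeMl => /andP[m_cop n_cop] x y /= fxy.
have n_odd : odd n.
  by rewrite -coprimen2 (coprime_dvdr _ n_cop) // dvdn2 oddB ?q_odd // ltnW.
have frob_Um t : (U t ^+ m) ^+ q = w ^+ (2 * m) * U t ^+ m.
  by rewrite exprAC frob_upart exprMn -exprM.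
have frob_Vn t : (eps * V t ^+ n) ^+ q = - w ^+ (j + 2 * n) * (eps * V t ^+ n).
  rewrite exprMn epsq exprAC frob_vpart exprMn exprNn -signr_odd n_odd -exprM exprD.
  by rewrite expr1; ring.
have := congr1 (fun t => t ^+ q) fxy; rewrite /= !frobD !frob_Um !frob_Vn => fxyq.
have two_neq0 := odd_prime_power_char_neq2 q_odd.
have [eUm eVn] := eq_of_weighted_sums (expr_neq_opp_expr (k := 3) _ _ two_neq0 isT w3) fxy fxyq.
apply: upart_vpart_inj.
- exact: expr_inj_eigen m_gt0 m_cop (expf_neq0 2 w_neq0) (frob_upart x) (frob_upart y) eUm.
- apply: expr_inj_eigen n_gt0 n_cop _ (frob_vpart x) (frob_vpart y) (mulfI eps0 eVn).
  by rewrite oppr_eq0 expf_neq0.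
Qed.

Lemma not_injective_of_not_coprime (m n : nat) (eps : F) :
  (0 < m)%N -> (0 < n)%N -> ~~ coprime (m * n) (q - 1) ->
  ~ injective (fun x => U x ^+ m + eps * V x ^+ n).
Proof.
move=> m_gt0 n_gt0 ncop f_inj.
have gcd_gt1 : (1 < gcdn (m * n) (q - 1))%N.
  by move: ncop; rewrite /coprime ltn_neqAle eq_sym => ->; rewrite gcdn_gt0 subn_gt0 q_gt1 orbT.
have r_pr := pdiv_prime gcd_gt1; set r := pdiv _ in r_pr.
have r_dvd : (r %| gcdn (m * n) (q - 1))%N by apply: pdiv_dvd.
have [zeta [zeta1 zeta_r zeta_q]] :=
  exists_subfield_root (prime_gt1 r_pr) (dvdn_trans r_dvd (dvdn_gcdr _ _)).
have zeta_exp k : (r %| k)%N -> zeta ^+ k = 1.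
  by case/dvdnP=> i ->; rewrite mulnC exprM zeta_r expr1n.
have Uz t : U (zeta * t) = zeta * U t by rewrite /upart exprMn zeta_q; ring.
have Vz t : V (zeta * t) = zeta * V t by rewrite /vpart exprMn zeta_q; ring.
have f_zeta_neq x : x != 0 -> U (zeta * x) ^+ m + eps * V (zeta * x) ^+ n
                         = U x ^+ m + eps * V x ^+ n -> False.
  by move=> x0 /f_inj/(canRL (mulfK x0)); rewrite divff //; apply/eqP.
have : (r %| m * n)%N by apply: dvdn_trans r_dvd (dvdn_gcdl _ _).
rewrite Euclid_dvdM // => /orP[r_m|r_n].
- have [|x x0 xq] := exists_frob_eigen (c := w).
    by rewrite addn1 exprSr expr_w_q -exprSr w3.
  have V0 : V x = 0 by rewrite /vpart xq subrr.
  by apply: (f_zeta_neq x x0); rewrite Uz Vz V0 mulr0 exprMn zeta_exp // mul1r.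
- have [|x x0 xq] := exists_frob_eigen (c := - w ^+ 2).
    rewrite exprNn exprAC addn1 -signr_odd /= q_odd expr0 mul1r.
    by rewrite [w ^+ _.+1]exprSr expr_w_q -exprSr w3 expr1n.
  have U0 : U x = 0.
    rewrite /upart xq (_ : _ + _ = (1 - w ^+ 3) * x); last by ring.
    by rewrite w3 subrr mul0r.
  by apply: (f_zeta_neq x x0); rewrite Uz Vz U0 mulr0 expr0n gtn_eqF // exprMn zeta_exp // mul1r.
Qed.

End CubeRootTwist.

End QuadraticFrobenius.

Theorem proposition3p7 (F : finFieldType) (q m n : nat) (w eps : F) :
  prime_power q -> odd q -> (q %% 3 = 2)%N ->
  #|F| = (q ^ 2)%N ->
  (0 < m)%N -> (0 < n)%N ->
  3.-primitive_root w ->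
  ((in_subfield_q q eps && (eps != 0)) ||
   [|| eps == w, eps == - w, eps == w ^+ 2 | eps == - w ^+ 2]) ->
  (is_perm_map (fun x : F => (x + w * x ^+ q) ^+ m + eps * (w * x - x ^+ q) ^+ n)
   <-> coprime (m * n) (q - 1)).
Proof.
move=> q_pp q_odd q_mod3 cardF m_gt0 n_gt0 w_prim eps_adm; split.
- move/bij_inj => f_inj; apply: contraT => ncop.
  by case: (not_injective_of_not_coprime q_pp cardF q_odd q_mod3 w_prim m_gt0 n_gt0 ncop f_inj).
- move=> cop; have [eps0 [j epsq]] := frob_eps_eigen q_pp cardF q_mod3 w_prim eps_adm.
  apply: injF_bij.
  exact: (injective_of_coprime q_pp cardF q_odd q_mod3 w_prim m_gt0 n_gt0 eps0 epsq cop).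
Qed.
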